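(* Let $\varphi : X \to X$ be a morphism in $\mathscr{C}$ and let $n\geq 2$ be an integer. Then $\varphi$ is core invertible if and only if there exists an annihilator $\eta : N\to X$ of $\varphi$ such that $\mu=\varphi^{n}+\eta^{*}\eta : X\to X$ is invertible. In this case $$\varphi^{\mathrm{core}}=\varphi^{n-1}\mu^{-1}.$$
   Context: $\mathscr{C}$ is an additive category with an involution $*$: a map on morphisms sending $\varphi : X\to Y$ to $\varphi^* : Y \to X$ such that $(\varphi^* )^*=\varphi$, $(\varphi\psi)^*=\psi^*\varphi^*$ and $(\varphi+\phi)^*=\varphi^*+\phi^*$. Composition is written left to right: for $\varphi : X\to Y$ and $\psi : Y\to Z$, $\varphi\psi : X \to Z$ means ''first $\varphi$, then $\psi$''. An annihilator of $\varphi : X\to Y$ is any morphism $\eta : N\to X$, for any object $N$, with $\eta\varphi=0$. A morphism is invertible if it has a two-sided inverse. For $\varphi : X\to X$, a core inverse of $\varphi$ is a morphism $\chi : X\to X$ with $(\varphi\chi)^*=\varphi\chi$, $\varphi\chi^2=\chi$ and $\chi\varphi^2=\varphi$. It is unique when it exists and is denoted $\varphi^{\mathrm{core}}$. *)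

From HB Require Import structures.
From mathcomp Require Import all_boot all_order all_algebra.
Set Implicit Arguments. Unset Strict Implicit. Unset Printing Implicit Defensive.
Import GRing.Theory.
Local Open Scope ring_scope.

(* An additive category with involution.  Composition is written
   left to right: mcomp f g = "first f, then g". *)
Record AddCatInv := {
  Obj : Type;
  Mor : Obj -> Obj -> zmodType;
  mcomp : forall X Y Z : Obj, Mor X Y -> Mor Y Z -> Mor X Z;
  idm : forall X : Obj, Mor X X;
  compA : forall (X Y Z W : Obj) (f : Mor X Y) (g : Mor Y Z) (h : Mor Z W),
      mcomp (mcomp f g) h = mcomp f (mcomp g h);
  comp1m : forall (X Y : Obj) (f : Mor X Y), mcomp (idm X) f = f;
  compm1 : forall (X Y : Obj) (f : Mor X Y), mcomp f (idm Y) = f;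
  compDl : forall (X Y Z : Obj) (f f' : Mor X Y) (g : Mor Y Z),
      mcomp (f + f') g = mcomp f g + mcomp f' g;
  compDr : forall (X Y Z : Obj) (f : Mor X Y) (g g' : Mor Y Z),
      mcomp f (g + g') = mcomp f g + mcomp f g';
  zobj : Obj;
  zobj_id : idm zobj = 0;
  biprod : Obj -> Obj -> Obj;
  bi_in1 : forall X Y, Mor X (biprod X Y);
  bi_in2 : forall X Y, Mor Y (biprod X Y);
  bi_pr1 : forall X Y, Mor (biprod X Y) X;
  bi_pr2 : forall X Y, Mor (biprod X Y) Y;
  bi_in1pr1 : forall X Y, mcomp (bi_in1 X Y) (bi_pr1 X Y) = idm X;
  bi_in2pr2 : forall X Y, mcomp (bi_in2 X Y) (bi_pr2 X Y) = idm Y;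
  bi_in1pr2 : forall X Y, mcomp (bi_in1 X Y) (bi_pr2 X Y) = 0;
  bi_in2pr1 : forall X Y, mcomp (bi_in2 X Y) (bi_pr1 X Y) = 0;
  bi_sum : forall X Y, mcomp (bi_pr1 X Y) (bi_in1 X Y)
                       + mcomp (bi_pr2 X Y) (bi_in2 X Y) = idm (biprod X Y);
  star : forall X Y : Obj, Mor X Y -> Mor Y X;
  starK : forall (X Y : Obj) (f : Mor X Y), star (star f) = f;
  starM : forall (X Y Z : Obj) (f : Mor X Y) (g : Mor Y Z),
      star (mcomp f g) = mcomp (star g) (star f);
  starD : forall (X Y : Obj) (f g : Mor X Y), star (f + g) = star f + star g
}.

Arguments Mor : clear implicits.
Arguments mcomp {_ _ _ _} _ _.
Arguments idm {_} _.
Arguments star {_ _ _} _.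

Fixpoint mpow (C : AddCatInv) (X : Obj C) (f : Mor C X X) (n : nat) : Mor C X X :=
  match n with
  | 0%N => idm X
  | k.+1 => mcomp (mpow f k) f
  end.

Definition annihilator (C : AddCatInv) (N X Y : Obj C)
  (eta : Mor C N X) (phi : Mor C X Y) : Prop := mcomp eta phi = 0.

Definition is_inverse (C : AddCatInv) (X Y : Obj C) (f : Mor C X Y) (g : Mor C Y X) : Prop :=
  mcomp f g = idm X /\ mcomp g f = idm Y.

Definition invertible (C : AddCatInv) (X Y : Obj C) (f : Mor C X Y) : Prop :=
  exists g : Mor C Y X, is_inverse f g.

Definition is_core_inverse (C : AddCatInv) (X : Obj C) (phi chi : Mor C X X) : Prop :=
  [/\ star (mcomp phi chi) = mcomp phi chi,
      mcomp phi (mcomp chi chi) = chi &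
      mcomp chi (mcomp phi phi) = phi].

Definition core_invertible (C : AddCatInv) (X : Obj C) (phi : Mor C X X) : Prop :=
  exists chi, is_core_inverse phi chi.

(* If chi is the core inverse of phi, then Q = 1 - phi chi is a self-adjoint
   idempotent with Q phi = 0, so eta = Q is an annihilator with eta* eta = Q,
   and phi^n + Q has the explicit inverse chi^n + 1 - chi phi.
   Conversely let E = eta* eta, mu = phi^n + E and nu = mu^-1.  From E phi = 0
   and phi* E = 0 one gets E nu = nu* E, so the idempotent P = phi^n nu = 1 - E nu
   is self-adjoint; taking adjoints in phi* P = phi* gives P phi = phi, and then
   phi^(n-1) nu satisfies the three defining equations.  The formula follows
   from uniqueness of core inverses. *)

From Pilot Require Import Defs.
From mathcomp Require Import all_boot all_order all_algebra.
Set Implicit Arguments. Unset Strict Implicit. Unset Printing Implicit Defensive.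
Import GRing.Theory.
Local Open Scope ring_scope.

Local Notation "f ⊙ g" := (mcomp f g) (at level 40, left associativity).
Local Notation mcompA := Defs.compA.

Lemma additive_morph0 (U V : zmodType) (f : U -> V) :
  {morph f : x y / x + y} -> f 0 = 0.
Proof. by move=> fD; apply: (@addrI _ (f 0)); rewrite -fD !addr0. Qed.

Lemma additive_morphB (U V : zmodType) (f : U -> V) :
  {morph f : x y / x + y} -> {morph f : x y / x - y}.
Proof. by move=> fD x y; apply: (@addIr _ (f y)); rewrite -fD !subrK. Qed.

Section AddCatInvTheory.

Variable C : AddCatInv.
Implicit Types X Y Z : Obj C.

Lemma comp0m X Y Z (g : Mor C Y Z) : (0 : Mor C X Y) ⊙ g = 0.
Proof. exact: (@additive_morph0 _ _ (mcomp^~ g) (fun h h' => compDl h h' g)). Qed.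

Lemma compm0 X Y Z (f : Mor C X Y) : f ⊙ (0 : Mor C Y Z) = 0.
Proof. exact: (@additive_morph0 _ _ (mcomp f) (compDr f)). Qed.

Lemma compBl X Y Z (f f' : Mor C X Y) (g : Mor C Y Z) : (f - f') ⊙ g = f ⊙ g - f' ⊙ g.
Proof. exact: (@additive_morphB _ _ (mcomp^~ g) (fun h h' => compDl h h' g)). Qed.

Lemma compBr X Y Z (f : Mor C X Y) (g g' : Mor C Y Z) : f ⊙ (g - g') = f ⊙ g - f ⊙ g'.
Proof. exact: (@additive_morphB _ _ (mcomp f) (compDr f)). Qed.

Lemma star0 X Y : star (0 : Mor C X Y) = 0.
Proof. exact: (@additive_morph0 _ _ (@star C X Y) (@starD C X Y)). Qed.

Lemma starB X Y (f g : Mor C X Y) : star (f - g) = star f - star g.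
Proof. exact: (@additive_morphB _ _ (@star C X Y) (@starD C X Y)). Qed.

Lemma star1 X : star (idm X) = idm X.
Proof. by have := starM (idm X) (star (idm X)); rewrite comp1m starK comp1m. Qed.

Lemma mpowSl X (f : Mor C X X) k : mpow f k.+1 = f ⊙ mpow f k.
Proof.
elim: k => [|k IH] /=; first by rewrite comp1m compm1.
by rewrite -mcompA -IH.
Qed.

Lemma mpowD X (f : Mor C X X) a b : mpow f (a + b) = mpow f a ⊙ mpow f b.
Proof. by elim: b => [|b IH]; rewrite ?addn0 ?compm1 // addnS /= IH mcompA. Qed.

Lemma mpowC X (f : Mor C X X) a b : mpow f a ⊙ mpow f b = mpow f b ⊙ mpow f a.
Proof. by rewrite -!mpowD addnC. Qed.

Lemma star_mpow X (f : Mor C X X) k : star (mpow f k) = mpow (star f) k.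
Proof. by elim: k => [|k IH] /=; rewrite ?star1 // starM IH -mpowSl. Qed.

Section CoreInverse.

Variables (X : Obj C) (phi chi : Mor C X X).
Hypothesis core : is_core_inverse phi chi.

Let phi_chi_sym : star (phi ⊙ chi) = phi ⊙ chi. Proof. by case: core. Qed.

Let phi_chi2 Y (g : Mor C X Y) : phi ⊙ (chi ⊙ (chi ⊙ g)) = chi ⊙ g.
Proof. by case: core => _ h _; rewrite -(mcompA chi chi) -mcompA h. Qed.

Let chi_phi2 Y (g : Mor C X Y) : chi ⊙ (phi ⊙ (phi ⊙ g)) = phi ⊙ g.
Proof. by case: core => _ _ h; rewrite -(mcompA phi phi) -mcompA h. Qed.

Lemma core_inv_phiK : phi ⊙ chi ⊙ phi = phi.
Proof. by case: core => _ _ h; rewrite -{2}h !mcompA phi_chi2 h. Qed.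

Lemma core_inv_chiK : chi ⊙ phi ⊙ chi = chi.
Proof. by case: core => _ h _; rewrite -{2}h !mcompA chi_phi2 h. Qed.

Let Q := idm X - phi ⊙ chi.

Let Q_star : star Q = Q. Proof. by rewrite starB star1 phi_chi_sym. Qed.

Let Q_phi : Q ⊙ phi = 0.
Proof. by rewrite compBl comp1m core_inv_phiK subrr. Qed.

Let Q_chi : Q ⊙ chi = 0.
Proof. by case: core => _ h _; rewrite compBl comp1m mcompA h subrr. Qed.

Let chi_Q : chi ⊙ Q = 0.
Proof. by rewrite compBr compm1 -mcompA core_inv_chiK subrr. Qed.

Let Q_idem : Q ⊙ Q = Q.
Proof. by rewrite {1}/Q compBl comp1m mcompA chi_Q compm0 subr0. Qed.

Lemma mpow_core_inv_l k : mpow phi k.+1 ⊙ mpow chi k.+1 = phi ⊙ chi.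
Proof.
elim: k => [|k IH]; first by rewrite /= !comp1m.
by rewrite [mpow phi _]/= mcompA !mpowSl phi_chi2 -mpowSl.
Qed.

Lemma mpow_core_inv_r k : mpow chi k.+1 ⊙ mpow phi k.+1 = chi ⊙ phi.
Proof.
suff chi_phi j : mpow chi j ⊙ mpow phi j.+1 = phi by rewrite mpowSl mcompA chi_phi.
elim: j => [|j IH]; first by rewrite /= !comp1m.
by rewrite [mpow chi _]/= 2!mpowSl mcompA chi_phi2 -mpowSl.
Qed.

Lemma core_inv_compl_inverse k :
  is_inverse (mpow phi k.+1 + Q) (mpow chi k.+1 + idm X - chi ⊙ phi).
Proof.
have phin_chi_phi : mpow phi k.+1 ⊙ (chi ⊙ phi) = mpow phi k.+1.
  by rewrite [mpow phi _]/= mcompA -(mcompA phi) core_inv_phiK.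
have chi_phi_phin : chi ⊙ phi ⊙ mpow phi k.+1 = mpow phi k.+1.
  by rewrite mcompA mpowSl chi_phi2.
have Q_chin : Q ⊙ mpow chi k.+1 = 0 by rewrite mpowSl -mcompA Q_chi comp0m.
have chin_Q : mpow chi k.+1 ⊙ Q = 0 by rewrite [mpow chi _]/= mcompA chi_Q compm0.
have chi_phi_Q : chi ⊙ phi ⊙ Q = chi ⊙ phi - phi ⊙ chi.
  by rewrite compBr compm1 mcompA chi_phi2.
split.
- rewrite compDl !compBr !compDr !compm1 mpow_core_inv_l phin_chi_phi Q_chin.
  by rewrite -mcompA Q_chi comp0m addrK add0r subr0 addrC subrK.
- (* [Q] is itself a difference, so [compDr] must not be allowed to split it. *)
  rewrite compBl compDl !(compDr _ (mpow phi k.+1) Q) !comp1m.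
  rewrite mpow_core_inv_r chin_Q chi_phi_phin chi_phi_Q addr0.
  by rewrite (addrC (mpow phi _)) addrA addrKA (addrC (chi ⊙ phi)) addrKA opprK subrK.
Qed.

Lemma core_inv_annihilator_invertible k :
  exists (N : Obj C) (eta : Mor C N X),
    annihilator eta phi /\ invertible (mpow phi k.+1 + star eta ⊙ eta).
Proof.
exists X, Q; split; first exact: Q_phi.
by rewrite Q_star Q_idem; exists (mpow chi k.+1 + idm X - chi ⊙ phi);
  exact: core_inv_compl_inverse.
Qed.

End CoreInverse.

Lemma core_inv_unique X (phi chi psi : Mor C X X) :
  is_core_inverse phi chi -> is_core_inverse phi psi -> chi = psi.
Proof.
move=> core_chi core_psi.
have phi_chi_psi : phi ⊙ chi = phi ⊙ psi.
  case: (core_chi) (core_psi) => sym _ _ [sym' _ _].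
  rewrite -sym -{1}(core_inv_phiK core_psi) mcompA starM sym sym'.
  by rewrite -mcompA (core_inv_phiK core_chi).
have chi_psi_phi : chi ⊙ phi = psi ⊙ phi.
  case: (core_chi) (core_psi) => _ h2 _ [_ _ h3'].
  rewrite -{1}h2 -{1}h3' (mcompA psi) (mcompA phi) h2 mcompA.
  by rewrite (core_inv_phiK core_chi).
rewrite -(core_inv_chiK core_chi) chi_psi_phi mcompA phi_chi_psi -mcompA.
exact: core_inv_chiK.
Qed.

Section AnnihilatorCoreInverse.

Variables (X N : Obj C) (phi : Mor C X X) (eta : Mor C N X) (nu : Mor C X X).
Variable k : nat.
Hypothesis eta_phi : eta ⊙ phi = 0.
Hypothesis nu_inv : is_inverse (mpow phi k.+2 + star eta ⊙ eta) nu.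

Let E := star eta ⊙ eta.
Let P := mpow phi k.+2 ⊙ nu.

Let E_star : star E = E. Proof. by rewrite starM starK. Qed.

Let E_phi : E ⊙ phi = 0. Proof. by rewrite mcompA eta_phi compm0. Qed.

Let star_phi_E : star phi ⊙ E = 0.
Proof. by rewrite -mcompA -starM eta_phi star0 comp0m. Qed.

Let E_mpow j : E ⊙ mpow phi j.+1 = 0.
Proof. by rewrite mpowSl -mcompA E_phi comp0m. Qed.

(* Both sides equal nu* E E nu, since E mu = E E = mu* E. *)
Let E_nu : E ⊙ nu = star nu ⊙ E.
Proof.
case: nu_inv; rewrite -/E => mu_nu _.
have E_mu : E ⊙ (mpow phi k.+2 + E) = E ⊙ E by rewrite compDr E_mpow add0r.
have mu_E : star (mpow phi k.+2 + E) ⊙ E = E ⊙ E.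
  by rewrite starD E_star compDl star_mpow /= mcompA star_phi_E compm0 add0r.
rewrite -[E ⊙ nu]comp1m -(star1 X) -mu_nu starM mcompA -(mcompA _ E) mu_E.
by rewrite -E_mu mcompA mu_nu compm1.
Qed.

Let P_compl : P = idm X - E ⊙ nu.
Proof. by case: nu_inv => mu_nu _; rewrite -mu_nu compDl addrK. Qed.

Let P_star : star P = P.
Proof. by rewrite P_compl starB star1 starM E_star -E_nu. Qed.

Let P_phi : P ⊙ phi = phi.
Proof.
have star_phi_P : star phi ⊙ P = star phi.
  by rewrite P_compl compBr compm1 -mcompA star_phi_E comp0m subr0.
by have := congr1 star star_phi_P; rewrite starM starK P_star.
Qed.

Let nu_mpow_phi : nu ⊙ (mpow phi k.+2 ⊙ phi) = phi.
Proof.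
case: nu_inv => _ nu_mu.
by rewrite -[mpow phi _ ⊙ _]addr0 -E_phi -compDl -mcompA nu_mu comp1m.
Qed.

Let mpow_nu_phi : mpow phi k.+1 ⊙ nu ⊙ phi = nu ⊙ mpow phi k.+2.
Proof.
case: nu_inv; rewrite -/E => _ nu_mu.
have mu_mpow : (mpow phi k.+2 + E) ⊙ mpow phi k.+1 = mpow phi k.+1 ⊙ mpow phi k.+2.
  by rewrite compDl E_mpow addr0 mpowC.
rewrite -[LHS]comp1m -nu_mu mcompA -2!(mcompA (mpow phi k.+2 + E)) mu_mpow.
by rewrite (mcompA (mpow phi k.+1)) -/P (mcompA (mpow phi k.+1)) P_phi.
Qed.

Lemma annihilator_core_inverse : is_core_inverse phi (mpow phi k.+1 ⊙ nu).
Proof.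
have phi_chi : phi ⊙ (mpow phi k.+1 ⊙ nu) = P by rewrite -mcompA -mpowSl.
split.
- by rewrite phi_chi P_star.
- by rewrite -mcompA phi_chi mpowSl -mcompA -mcompA P_phi mcompA.
- by rewrite -mcompA mpow_nu_phi mcompA nu_mpow_phi.
Qed.

End AnnihilatorCoreInverse.

End AddCatInvTheory.

Theorem theorem2p8 (C : AddCatInv) (X : Obj C) (phi : Mor C X X) (n : nat)
    (hn : (2 <= n)%N) :
  (core_invertible phi <->
     exists (N : Obj C) (eta : Mor C N X),
       annihilator eta phi /\ invertible (mpow phi n + mcomp (star eta) eta))
  /\
  (forall (N : Obj C) (eta : Mor C N X) (muinv : Mor C X X),
      annihilator eta phi ->
      is_inverse (mpow phi n + mcomp (star eta) eta) muinv ->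
      is_core_inverse phi (mcomp (mpow phi n.-1) muinv)
      /\ (forall chi, is_core_inverse phi chi -> chi = mcomp (mpow phi n.-1) muinv)).
Proof.
case: n hn => [|[|k]] // _; split.
- split=> [[chi core] | [N [eta [eta_phi [nu nu_inv]]]]].
    exact: core_inv_annihilator_invertible core k.+1.
  by exists (mpow phi k.+1 ⊙ nu); exact: annihilator_core_inverse eta_phi nu_inv.
- move=> N eta nu eta_phi nu_inv; have core := annihilator_core_inverse eta_phi nu_inv.
  by split=> // chi core'; exact: core_inv_unique core' core.
Qed.
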